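(* Let $d\ge2$, $\omega:=\frac1{\sqrt d}\sum_{i=1}^de_i\otimes e_i\in\mathbb C^d\otimes\mathbb C^d$, $P_\omega:=\omega\omega^\ast$. Fix $\alpha\in[1,d]$, $k:=\lfloor\alpha\rfloor$, $\theta:=\alpha-k\in[0,1)$. Then $$\mu_\alpha(P_\omega)=\max_{\psi\in\mathcal V_\alpha}\langle\psi,P_\omega\psi\rangle=\frac{(k+\theta)^2}{d(k+\theta^2)}.$$ Moreover the maximum is attained by some $\psi\in\mathcal V_\alpha$ with Schmidt coefficients $s_1=\dots=s_k=\frac1{\sqrt{k+\theta^2}}$, $s_{k+1}=\frac\theta{\sqrt{k+\theta^2}}$ (which is $0$ when $\theta=0$), $s_j=0$ for $j\ge k+2$; when $\alpha=d$ one may take $\psi=\omega$.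
   Context: Schmidt coefficients $s_1(\psi)\ge\dots\ge s_d(\psi)\ge0$ of $\psi=\sum a_{ij}e_i\otimes e_j$ are the singular values of $[a_{ij}]$. For $\alpha\in[1,d]$ with $k=\lfloor\alpha\rfloor$, $\theta=\alpha-k$, $r=\lceil\alpha\rceil$, a unit vector $\psi$ is $\alpha$-admissible if $s_j(\psi)=0$ for $j\ge r+1$ and, when $\theta>0$, $s_{k+1}(\psi)\le\frac\theta k\sum_{j=1}^ks_j(\psi)$; $\mathcal V_\alpha$ is the set of these. For Hermitian $W$, $\mu_\alpha(W):=\max\{\langle\psi,W\psi\rangle:\psi\in\mathcal V_\alpha\}$. *)

From mathcomp Require Import all_boot all_order all_algebra.
From mathcomp Require Import reals complex.
Set Implicit Arguments. Unset Strict Implicit. Unset Printing Implicit Defensive.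
Import Order.TTheory GRing.Theory Num.Theory.
Local Open Scope ring_scope.

Section Defs.
Variable R : realType.
Local Notation C := R[i].

Definition toC (x : R) : C := Complex x 0.

Definition mxadj m n (A : 'M[C]_(m, n)) : 'M[C]_(n, m) := (map_mx conjc A)^T.

Definition unitary n (U : 'M[C]_n) : Prop := U *m mxadj U = 1%:M.

Definition singular_values d (A : 'M[C]_d) (s : 'I_d -> R) : Prop :=
  (forall j, 0 <= s j) /\
  (forall i j : 'I_d, (i <= j)%N -> s j <= s i) /\
  exists U V : 'M[C]_d, [/\ unitary U, unitary V &
     A = U *m diag_mx (\row_j toC (s j)) *m mxadj V].

(* C^d (x) C^d is identified with C^(d*d) via mxvec/vec_mx:
   psi = sum_{i,j} a_ij e_i (x) e_j  has coefficient matrix  coefmx psi = [a_ij]. *)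
Definition coefmx d (psi : 'cV[C]_(d * d)) : 'M[C]_d := vec_mx psi^T.

Definition schmidt_coeffs d (psi : 'cV[C]_(d * d)) (s : 'I_d -> R) : Prop :=
  singular_values (coefmx psi) s.

Definition inner n (phi chi : 'cV[C]_n) : C := (mxadj phi *m chi) 0 0.

Definition unit_vector n (psi : 'cV[C]_n) : Prop := inner psi psi = 1.

(* alpha-admissible unit vectors; 0-based indices: s_j (1-based) = s (j-1) *)
Definition admissible d (alpha : R) (psi : 'cV[C]_(d * d)) : Prop :=
  let k := Num.floor alpha in
  let theta := alpha - k%:~R in
  let r := Num.ceil alpha in
  unit_vector psi /\
  exists s : 'I_d -> R, schmidt_coeffs psi s /\
    (forall j : 'I_d, r <= (j : nat)%:Z -> s j = 0) /\
    (0 < theta -> forall j : 'I_d, (j : nat)%:Z = k ->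
       s j <= theta / k%:~R * \sum_(i < d | ((i : nat)%:Z < k)%R) s i).

Definition is_mu d (alpha : R) (W : 'M[C]_(d * d)) (m : R) : Prop :=
  (exists2 psi, admissible alpha psi & inner psi (W *m psi) = toC m) /\
  (forall psi, admissible alpha psi -> inner psi (W *m psi) <= toC m).

Definition omega d : 'cV[C]_(d * d) :=
  toC (Num.sqrt (d%:R : R))^-1 *: (mxvec (1%:M : 'M[C]_d))^T.

Definition P_omega d : 'M[C]_(d * d) := omega d *m mxadj (omega d).

End Defs.

Arguments omega {R} d.
Arguments P_omega {R} d.

(* Write A for the coefficient matrix of psi.  Then <psi, P_omega psi> = |tr A|^2 / d,
   and |tr A| <= s_1 + ... + s_d because, in a singular value decomposition
   A = U diag(s) V^*, the diagonal entries of the unitary V^* U have modulus at most 1.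
   For psi in V_alpha only s_1, ..., s_(k+1) can be nonzero; with S the sum of the
   first k of them and t = s_(k+1), Cauchy-Schwarz and |psi| = 1 give S^2 + k t^2 <= k,
   while admissibility gives k t <= theta S.  Under these two constraints
   (S + t)^2 <= (k + theta)^2 / (k + theta^2), with equality for the diagonal vector
   with the announced Schmidt coefficients, which for alpha = d is omega itself. *)

From mathcomp Require Import all_boot all_order all_algebra.
From mathcomp Require Import reals complex.
From mathcomp Require Import ring lra.
Import Order.TTheory GRing.Theory Num.Theory.
Set Implicit Arguments. Unset Strict Implicit. Unset Printing Implicit Defensive.
Local Open Scope ring_scope.

Lemma card_ord_lt d k : (k <= d)%N -> #|[pred i : 'I_d | (i < k)%N]| = k.
Proof. by move=> kd; rewrite -sum1_card (big_ord_narrow kd) -[RHS]card_ord -sum1_card. Qed.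

Lemma card_ord_eq d k : #|[pred i : 'I_d | (i : nat) == k]| = (k < d)%N.
Proof.
case: ltnP => [kd | dk].
  by apply: (@eq_card1 _ (Ordinal kd)) => i; rewrite !inE.
by apply: eq_card0 => i; rewrite !inE ltn_eqF // (leq_trans (ltn_ord i) dk).
Qed.

Lemma sum_mxvec_index (V : nmodType) m n (F : 'I_(m * n) -> V) :
  \sum_k F k = \sum_i \sum_j F (mxvec_index i j).
Proof.
rewrite pair_big /= (reindex (uncurry (@mxvec_index m n))) /=.
  by apply: eq_bigr => -[i j].
by case: (curry_mxvec_bij m n) => g h1 h2; exists g => x _; [exact: h1 | exact: h2].
Qed.

Section RealBound.
Variable R : realFieldType.

Lemma sqr_sum_le_card (I : finType) (P : pred I) (f : I -> R) :
  (\sum_(i | P i) f i) ^+ 2 <= #|P|%:R * \sum_(i | P i) f i ^+ 2.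
Proof.
set S := \sum_(i | P i) f i; set Q := \sum_(i | P i) f i ^+ 2.
have sum_const c : \sum_(i | P i) c = #|P|%:R * c by rewrite sumr_const mulr_natl.
have row_sum i : \sum_(j | P j) (f i - f j) ^+ 2 = #|P|%:R * f i ^+ 2 - (f i * S) *+ 2 + Q.
  rewrite (eq_bigr _ (fun j _ => sqrrB (f i) (f j))) !big_split /= sumrN sum_const.
  by rewrite sumrMnl -mulr_sumr.
have : 0 <= \sum_(i | P i) \sum_(j | P j) (f i - f j) ^+ 2.
  by apply: sumr_ge0 => i _; apply: sumr_ge0 => j _; apply: sqr_ge0.
rewrite (eq_bigr _ (fun i _ => row_sum i)) !big_split /= sumrN sumrMnl sum_const.
rewrite -mulr_sumr -mulr_suml -/Q -/S; lra.
Qed.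

Lemma two_block_sqr_le (k theta S t : R) : 1 <= k -> 0 <= theta -> theta <= 1 -> 0 <= S ->
  k * t <= theta * S ->
  k * (k + theta ^+ 2) * (S + t) ^+ 2 <= (k + theta) ^+ 2 * (S ^+ 2 + k * t ^+ 2).
Proof.
move=> k1 th0 th1 S0 kt; rewrite -subr_ge0.
have gap0 : 0 <= theta * S - k * t by rewrite subr_ge0.
(* The difference of the two sides factors through theta S - k t, which vanishes at the
   optimum. *)
have : 0 <= (theta * S - k * t) *
    ((k + theta) * (1 - theta) * S *+ 2 + (k + theta *+ 2 - 1) * (theta * S - k * t)).
  apply/mulr_ge0/addr_ge0 => //; last by apply: mulr_ge0 => //; lra.
  by rewrite mulrn_wge0 // !mulr_ge0 //; lra.
congr (_ <= _); ring.
Qed.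

(* For
   nonnegative s and theta = 0 it forces s k = 0, matching s_j = 0 for j >= ceil alpha. *)
Definition admissible_coeffs d (k : nat) (theta : R) (s : 'I_d -> R) : Prop :=
  (forall j : 'I_d, (k < j)%N -> s j = 0) /\
  (forall j : 'I_d, (j : nat) = k -> k%:R * s j <= theta * \sum_(i : 'I_d | (i < k)%N) s i).

Lemma sum_ord_split_at d k (F : 'I_d -> R) : (forall j : 'I_d, (k < j)%N -> F j = 0) ->
  \sum_i F i = \sum_(i : 'I_d | (i < k)%N) F i + \sum_(i : 'I_d | (i : nat) == k) F i.
Proof.
move=> F0; rewrite (bigID (fun i : 'I_d => (i < k)%N)) /=; congr (_ + _).
rewrite (bigID (fun i : 'I_d => (i : nat) == k)) /= [X in _ + X]big1 ?addr0.
  by apply: eq_bigl => i; case: ltngtP.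
by move=> i; case: ltngtP => // ki _; apply: F0.
Qed.

Lemma admissible_sum_sqr_le d k (theta : R) (s : 'I_d -> R) :
  (0 < k)%N -> (k <= d)%N -> 0 <= theta -> theta <= 1 -> (forall j, 0 <= s j) ->
  \sum_i s i ^+ 2 <= 1 -> admissible_coeffs k theta s ->
  (\sum_i s i) ^+ 2 <= (k%:R + theta) ^+ 2 / (k%:R + theta ^+ 2).
Proof.
move=> k0 kd th0 th1 s0 norm_s [s_tail s_at_k].
rewrite (sum_ord_split_at (k := k)) // in norm_s; last by move=> j /s_tail ->; rewrite expr0n.
rewrite (sum_ord_split_at (k := k)) //.
set S := \sum_(i | _) s i in s_at_k *; set t := \sum_(i | _) s i.
have CS_head : S ^+ 2 <= k%:R * \sum_(i : 'I_d | (i < k)%N) s i ^+ 2.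
  by rewrite -[in k%:R](card_ord_lt kd); apply: (sqr_sum_le_card [pred i : 'I_d | (i < k)%N]).
have CS_at_k : t ^+ 2 <= \sum_(i : 'I_d | (i : nat) == k) s i ^+ 2.
  apply: le_trans (sqr_sum_le_card [pred i : 'I_d | (i : nat) == k] _) _.
  by rewrite ler_piMl ?sumr_ge0 // => [i _|]; rewrite ?sqr_ge0 // lern1 card_ord_eq leq_b1.
have kt : k%:R * t <= theta * S.
  rewrite mulr_sumr; apply: le_trans (ler_sum _ (fun j jk => s_at_k j (eqP jk))) _.
  rewrite sumr_const -mulr_natl ler_piMl ?mulr_ge0 ?sumr_ge0 //.
  by rewrite lern1 card_ord_eq leq_b1.
have k1 : 1 <= k%:R :> R by rewrite ler1n.
have kp : 0 < k%:R + theta ^+ 2 :> R by rewrite ltr_wpDr ?sqr_ge0 // (lt_le_trans ltr01).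
rewrite ler_pdivlMr // -(ler_pM2l (lt_le_trans ltr01 k1)).
have norm_split : S ^+ 2 + k%:R * t ^+ 2 <= k%:R.
  apply: le_trans (lerD CS_head (ler_wpM2l (ler0n _ _) CS_at_k)) _.
  by rewrite -mulrDr ler_piMr.
rewrite mulrCA [in X in _ <= X]mulrC [X in X <= _]mulrC.
apply: le_trans (two_block_sqr_le k1 th0 th1 (sumr_ge0 _ (fun i _ => s0 i)) kt) _.
by apply: ler_wpM2l; [exact: sqr_ge0 | exact: norm_split].
Qed.

Lemma sum_step_profile d k (F : 'I_d -> R) a b : (k <= d)%N -> (k = d -> b = 0) ->
  (forall j : 'I_d, (j < k)%N -> F j = a) -> (forall j : 'I_d, (j : nat) = k -> F j = b) ->
  (forall j : 'I_d, (k < j)%N -> F j = 0) ->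
  \sum_i F i = k%:R * a + b.
Proof.
move=> kd b0 F_head F_at_k F_tail.
rewrite (sum_ord_split_at (k := k)) //; congr (_ + _).
  by rewrite (eq_bigr (fun _ => a)) // sumr_const card_ord_lt // mulr_natl.
rewrite (eq_bigr (fun _ => b)) => [|j /eqP]; last exact: F_at_k.
by rewrite sumr_const card_ord_eq; case: ltngtP kd => // /b0 ->.
Qed.

End RealBound.

Section OptimalCoeffs.
Variable R : rcfType.

Definition optimal_coeffs d (k : nat) (theta : R) (j : 'I_d) : R :=
  if (j < k)%N then (Num.sqrt (k%:R + theta ^+ 2))^-1
  else if (j : nat) == k then theta / Num.sqrt (k%:R + theta ^+ 2) else 0.

Section Profile.
Variables (d k : nat) (theta : R).
Hypotheses (k_gt0 : (0 < k)%N) (k_le_d : (k <= d)%N) (theta_ge0 : 0 <= theta)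
  (theta_le1 : theta <= 1) (theta_eq0 : k = d -> theta = 0).
Let q := Num.sqrt (k%:R + theta ^+ 2).
Let s := @optimal_coeffs d k theta.

Let q_gt0 : 0 < q.
Proof. by rewrite sqrtr_gt0 ltr_wpDr ?sqr_ge0 ?ltr0n. Qed.

Let s_head (j : 'I_d) : (j < k)%N -> s j = q^-1.
Proof. by rewrite /s /optimal_coeffs => ->. Qed.

Let s_at_k (j : 'I_d) : (j : nat) = k -> s j = theta / q.
Proof. by rewrite /s /optimal_coeffs => ->; rewrite ltnn eqxx. Qed.

Let s_tail (j : 'I_d) : (k < j)%N -> s j = 0.
Proof. by rewrite /s /optimal_coeffs => kj; rewrite ltnNge ltnW // gtn_eqF. Qed.

Lemma optimal_coeffs_ge0 j : 0 <= s j.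
Proof.
case: (ltngtP j k) => [/s_head -> | /s_tail -> //| /s_at_k ->].
  by rewrite invr_ge0 ltW.
by rewrite divr_ge0 // ltW.
Qed.

Lemma optimal_coeffs_nonincreasing (i j : 'I_d) : (i <= j)%N -> s j <= s i.
Proof.
move=> ij; case: (ltngtP j k) => [jk | /s_tail -> | jk].
- by rewrite !s_head // (leq_ltn_trans ij jk).
- exact: optimal_coeffs_ge0.
case: (ltngtP i k) => [/s_head -> | ki | ik]; last by rewrite !s_at_k.
  by rewrite s_at_k // ler_pdivrMr // mulVf ?gt_eqF.
by move: ij; rewrite jk leqNgt ki.
Qed.

Let sum_head : \sum_(i : 'I_d | (i < k)%N) s i = k%:R / q.
Proof. by rewrite (eq_bigr (fun _ => q^-1)) // sumr_const card_ord_lt // mulr_natl. Qed.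

Lemma optimal_coeffs_admissible : admissible_coeffs k theta s.
Proof.
split=> [j /s_tail // | j /s_at_k ->].
by rewrite sum_head mulrCA mulrA.
Qed.

Lemma sum_optimal_coeffs : \sum_i s i = (k%:R + theta) / q.
Proof.
rewrite mulrDl (sum_step_profile k_le_d _ s_head s_at_k s_tail) //.
by move/theta_eq0 ->; rewrite mul0r.
Qed.

Lemma sum_sqr_optimal_coeffs : \sum_i s i ^+ 2 = 1.
Proof.
have q2 : q ^+ 2 = k%:R + theta ^+ 2 by rewrite sqr_sqrtr // addr_ge0 ?sqr_ge0.
rewrite (@sum_step_profile _ d k _ (q ^- 2) (theta ^+ 2 / q ^+ 2)) //.
- by rewrite -mulrDl q2 divff // -q2 sqrf_eq0 gt_eqF.
- by move/theta_eq0 ->; rewrite expr0n mul0r.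
- by move=> j /s_head ->; rewrite exprVn.
- by move=> j /s_at_k ->; rewrite expr_div_n.
- by move=> j /s_tail ->; rewrite expr0n.
Qed.

End Profile.
End OptimalCoeffs.

Lemma floor_natP (R : archiRealDomainType) (alpha : R) : 1 <= alpha ->
  exists2 k : nat, Num.floor alpha = k%:Z & [/\ (0 < k)%N, k%:R <= alpha & alpha < k%:R + 1].
Proof.
move=> alpha_ge1; have floor_gt0' : 0 < Num.floor alpha by rewrite floor_gt0.
have floor_k : Num.floor alpha = `|Num.floor alpha|%N%:Z by rewrite gez0_abs // ltW.
exists `|Num.floor alpha|%N => //.
have := floor_itv alpha; rewrite floor_k intrD /= => /andP[-> ->].
by rewrite -ltz_nat -floor_k.
Qed.

Section Adjoint.
Variable R : realType.
Local Notation C := R[i].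

Lemma toCE (x : R) : toC x = (x%:C)%C. Proof. by []. Qed.

Lemma mxadjE m n (A : 'M[C]_(m, n)) i j : mxadj A i j = (A j i)^*%C.
Proof. by rewrite !mxE. Qed.

Lemma mxadjM m n p (A : 'M[C]_(m, n)) (B : 'M[C]_(n, p)) :
  mxadj (A *m B) = mxadj B *m mxadj A.
Proof. by rewrite /mxadj map_mxM trmx_mul. Qed.

Lemma mxadjK m n : cancel (@mxadj R m n) (@mxadj R n m).
Proof. by move=> A; apply/matrixP => i j; rewrite !mxadjE conjcK. Qed.

Lemma mxadj_real_diag n (s : 'I_n -> R) :
  mxadj (diag_mx (\row_j toC (s j))) = diag_mx (\row_j toC (s j)).
Proof.
apply/matrixP => i j; rewrite mxadjE !mxE eq_sym.
by case: eqP => [->|_]; rewrite ?conjc_real ?conjc0.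
Qed.

Lemma unitary_adj_mul n (U : 'M[C]_n) : unitary U -> mxadj U *m U = 1%:M.
Proof. exact: mulmx1C. Qed.

Lemma unitary_adj n (U : 'M[C]_n) : unitary U -> unitary (mxadj U).
Proof. by move=> /unitary_adj_mul; rewrite /unitary mxadjK. Qed.

Lemma unitaryM n (U V : 'M[C]_n) : unitary U -> unitary V -> unitary (U *m V).
Proof.
by move=> hU hV; rewrite /unitary mxadjM mulmxA -(mulmxA U) hV mulmx1.
Qed.

Lemma unitary_diag_le1 n (U : 'M[C]_n) i : unitary U -> `|U i i| <= 1.
Proof.
move=> /matrixP /(_ i i); rewrite !mxE eqxx mulr1n => row_norm.
rewrite -(@expr_le1 _ 2) // -row_norm (bigD1 i) //= mxadjE -sqr_normc lerDl.
by apply: sumr_ge0 => j _; rewrite mxadjE -sqr_normc exprn_ge0.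
Qed.


End Adjoint.

Section CoefficientMatrix.
Variable R : realType.
Local Notation C := R[i].

Lemma inner_coefmx d (psi phi : 'cV[C]_(d * d)) :
  inner psi phi = \tr (mxadj (coefmx psi) *m coefmx phi).
Proof.
rewrite /inner mxE sum_mxvec_index.
rewrite exchange_big; apply: eq_bigr => j _; rewrite mxE; apply: eq_bigr => i _.
by rewrite !mxE.
Qed.

Lemma inner_rank_one n (phi psi : 'cV[C]_n) :
  inner psi (phi *m mxadj phi *m psi) = `|inner phi psi| ^+ 2.
Proof.
rewrite sqr_normc /inner -mulmxA mulmxA [in LHS]mxE big_ord1.
by rewrite -[mxadj psi *m phi]mxadjK mxadjM mxadjK mxadjE mulrC.
Qed.

Lemma coefmx_omega d : coefmx (omega d) = toC (Num.sqrt (d%:R : R))^-1 *: 1%:M.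
Proof. by rewrite /coefmx /omega linearZ /= trmxK linearZ /= mxvecK. Qed.

Lemma mxadj_scalar n (a : C) : mxadj (a%:M : 'M_n) = (a^*%C)%:M.
Proof.
by apply/matrixP => i j; rewrite mxadjE !mxE eq_sym; case: eqP; rewrite ?conjc0.
Qed.

Lemma inner_omega d (psi : 'cV[C]_(d * d)) :
  inner (omega d) psi = toC (Num.sqrt (d%:R : R))^-1 * \tr (coefmx psi).
Proof.
by rewrite inner_coefmx coefmx_omega scalemx1 mxadj_scalar mul_scalar_mx mxtraceZ conjc_real.
Qed.

Lemma inner_P_omega d (psi : 'cV[C]_(d * d)) :
  inner psi (P_omega d *m psi) = `|\tr (coefmx psi)| ^+ 2 / d%:R.
Proof.
rewrite inner_rank_one inner_omega normrM exprMn mulrC; congr (_ * _).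
rewrite toCE ger0_norm ?ler0c ?invr_ge0 ?sqrtr_ge0 // -rmorphXn exprVn.
by rewrite sqr_sqrtr ?ler0n // fmorphV rmorph_nat.
Qed.

Lemma mxtrace_adj_mul_singular d (A : 'M[C]_d) s :
  singular_values A s -> \tr (mxadj A *m A) = toC (\sum_i s i ^+ 2).
Proof.
case=> _ [_ [U [V [hU hV ->]]]]; set D := diag_mx _.
rewrite !mxadjM mxadjK mxadj_real_diag -/D !mulmxA -[V *m D *m _ *m U]mulmxA.
rewrite unitary_adj_mul // mulmx1 mxtrace_mulC !mulmxA unitary_adj_mul // mul1mx.
rewrite mulmx_diag mxtrace_diag toCE rmorph_sum; apply: eq_bigr => i _.
by rewrite !mxE rmorphXn.
Qed.

Lemma norm_mxtrace_le_singular d (A : 'M[C]_d) s :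
  singular_values A s -> `|\tr A| <= toC (\sum_i s i).
Proof.
case=> s_ge0 [_ [U [V [hU hV ->]]]].
have := unitaryM (unitary_adj hV) hU; set W := mxadj V *m U => hW.
rewrite -mulmxA mxtrace_mulC -mulmxA -/W mul_diag_mx /mxtrace toCE rmorph_sum.
apply: le_trans (ler_norm_sum _ _ _) _; apply: ler_sum => i _.
have := unitary_diag_le1 i hW; rewrite !mxE normrM ger0_norm ?ler0c //.
by move=> W_le1; apply: ler_piMr; rewrite ?toCE ?ler0c.
Qed.

Lemma inner_self_schmidt d (psi : 'cV[C]_(d * d)) s :
  schmidt_coeffs psi s -> inner psi psi = toC (\sum_i s i ^+ 2).
Proof. by move=> /mxtrace_adj_mul_singular <-; rewrite inner_coefmx. Qed.

Lemma inner_P_omega_le_schmidt d (psi : 'cV[C]_(d * d)) s :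
  schmidt_coeffs psi s -> inner psi (P_omega d *m psi) <= toC ((\sum_i s i) ^+ 2 / d%:R).
Proof.
move=> /norm_mxtrace_le_singular tr_le; rewrite inner_P_omega toCE rmorphM fmorphV rmorph_nat.
rewrite ler_wpM2r ?invr_ge0 ?ler0n // rmorphXn lerXn2r ?nnegrE //.
by apply: le_trans tr_le.
Qed.

Definition schmidt_vector d (s : 'I_d -> R) : 'cV[C]_(d * d) :=
  (mxvec (diag_mx (\row_j toC (s j))))^T.

Lemma coefmx_schmidt_vector d (s : 'I_d -> R) :
  coefmx (schmidt_vector s) = diag_mx (\row_j toC (s j)).
Proof. by rewrite /coefmx trmxK mxvecK. Qed.

Lemma schmidt_coeffs_schmidt_vector d (s : 'I_d -> R) : (forall j, 0 <= s j) ->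
  (forall i j : 'I_d, (i <= j)%N -> s j <= s i) -> schmidt_coeffs (schmidt_vector s) s.
Proof.
move=> s_ge0 s_noninc; do 2!split=> //; exists 1%:M, 1%:M.
have unitary1 : unitary (1%:M : 'M[C]_d) by rewrite /unitary mul1mx /mxadj map_mx1 trmx1.
by rewrite coefmx_schmidt_vector /mxadj map_mx1 trmx1 mul1mx mulmx1.
Qed.

Lemma inner_P_omega_schmidt_vector d (s : 'I_d -> R) : (forall j, 0 <= s j) ->
  inner (schmidt_vector s) (P_omega d *m schmidt_vector s) = toC ((\sum_i s i) ^+ 2 / d%:R).
Proof.
move=> s_ge0; rewrite inner_P_omega coefmx_schmidt_vector mxtrace_diag.
under eq_bigr do rewrite mxE toCE.
rewrite -rmorph_sum ger0_norm ?ler0c ?sumr_ge0 //.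
by rewrite toCE rmorphM rmorphXn fmorphV rmorph_nat.
Qed.

End CoefficientMatrix.

Section Admissibility.
Variable R : realType.
Local Notation C := R[i].

Lemma inner_P_omega_admissible_le d k (theta : R) (psi : 'cV[C]_(d * d)) s :
  (0 < k)%N -> (k <= d)%N -> 0 <= theta -> theta <= 1 ->
  unit_vector psi -> schmidt_coeffs psi s -> admissible_coeffs k theta s ->
  inner psi (P_omega d *m psi) <= toC ((k%:R + theta) ^+ 2 / (d%:R * (k%:R + theta ^+ 2))).
Proof.
move=> k_gt0 k_le_d theta_ge0 theta_le1 psi_unit psi_s s_adm.
have norm_s : \sum_i s i ^+ 2 <= 1.
  by rewrite -lecR -toCE -(inner_self_schmidt psi_s) psi_unit rmorph1.
have := admissible_sum_sqr_le k_gt0 k_le_d theta_ge0 theta_le1 psi_s.1 norm_s s_adm.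
have d_inv_ge0 : 0 <= (d%:R : R)^-1 by rewrite invr_ge0 ler0n.
move=> /(ler_wpM2r d_inv_ge0) sum_le.
apply: le_trans (inner_P_omega_le_schmidt psi_s) _; rewrite !toCE lecR.
by apply: le_trans sum_le _; rewrite invfM mulrAC mulrA.
Qed.

Lemma optimal_schmidt_vector d k (theta : R) :
  (0 < k)%N -> (k <= d)%N -> 0 <= theta -> theta <= 1 -> (k = d -> theta = 0) ->
  let s := optimal_coeffs k theta in
  [/\ schmidt_coeffs (schmidt_vector s) s, unit_vector (schmidt_vector s)
    & inner (schmidt_vector s) (P_omega d *m schmidt_vector s)
      = toC ((k%:R + theta) ^+ 2 / (d%:R * (k%:R + theta ^+ 2)))].
Proof.
move=> k_gt0 k_le_d theta_ge0 theta_le1 theta_eq0 s.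
have s_ge0 := optimal_coeffs_ge0 (d := d) k_gt0 theta_ge0.
have s_s := schmidt_coeffs_schmidt_vector s_ge0 (optimal_coeffs_nonincreasing k_gt0 theta_ge0 theta_le1).
split=> //.
  by rewrite /unit_vector (inner_self_schmidt s_s) sum_sqr_optimal_coeffs.
rewrite inner_P_omega_schmidt_vector // sum_optimal_coeffs // expr_div_n.
by rewrite sqr_sqrtr ?addr_ge0 ?sqr_ge0 // invfM mulrAC mulrA.
Qed.

Lemma omega_optimal d : omega d = schmidt_vector (optimal_coeffs d (0 : R)).
Proof.
rewrite /omega /schmidt_vector -!linearZ /=; congr (mxvec _)^T.
apply/matrixP => i j; rewrite !mxE /optimal_coeffs ltn_ord expr2 mulr0 addr0.
by rewrite mulr_natr.
Qed.

Lemma admissibleE d (alpha : R) (psi : 'cV[C]_(d * d)) k :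
  Num.floor alpha = k%:Z -> (0 < k)%N ->
  admissible alpha psi <->
  unit_vector psi /\ exists2 s, schmidt_coeffs psi s & admissible_coeffs k (alpha - k%:R) s.
Proof.
move=> floor_k k_gt0; have := floor_itv alpha; rewrite floor_k intrD /= => /andP[k_le k_gt].
have k_gt0' : 0 < k%:R :> R by rewrite ltr0n.
rewrite /admissible floor_k /=; split=> -[psi_unit].
  move=> [s [psi_s [vanish bound]]]; split=> //; exists s => //.
  split=> [j k_lt_j | j j_eq_k].
    apply: vanish; rewrite ceil_le_int; apply: le_trans (ltW k_gt) _.
    by rewrite natr1 ler_nat.
  have [theta_gt0 | theta_le0] := ltrP 0 (alpha - k%:R).
    have := bound theta_gt0 j (congr1 Posz j_eq_k).
    by rewrite mulrAC ler_pdivlMr // mulrC.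
  rewrite vanish ?mulr0 ?mulr_ge0 ?subr_ge0 ?sumr_ge0 // => [i _|]; first exact: psi_s.1.
  by rewrite ceil_le_int j_eq_k -subr_le0.
move=> [s psi_s [tail at_k]]; split=> //; exists s; split=> //.
split=> [j | theta_gt0 j [j_eq_k]].
  rewrite ceil_le_int => alpha_le_j.
  have : (k <= j)%N by rewrite -(ler_nat R); apply: le_trans k_le alpha_le_j.
  rewrite leq_eqVlt => /orP[/eqP k_eq_j | /tail //].
  apply/eqP; rewrite eq_le psi_s.1 andbT -(ler_pM2l k_gt0') mulr0.
  apply: le_trans (at_k j (esym k_eq_j)) _; rewrite mulr_le0_ge0 ?sumr_ge0 // => [|i _].
    by rewrite subr_le0 k_eq_j.
  exact: psi_s.1.
by rewrite mulrAC ler_pdivlMr // mulrC at_k.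
Qed.

End Admissibility.

Theorem lemma4p5 (R : realType) (d : nat) (alpha : R) :
  (2 <= d)%N -> 1 <= alpha <= d%:R ->
  let k : int := Num.floor alpha in
  let theta : R := alpha - k%:~R in
  let value : R := (k%:~R + theta) ^+ 2 / (d%:R * (k%:~R + theta ^+ 2)) in
  [/\ is_mu alpha (P_omega d) value,
      (exists2 psi : 'cV[R[i]]_(d * d), admissible alpha psi &
         inner psi (P_omega d *m psi) = toC value /\
         schmidt_coeffs psi (fun j : 'I_d =>
           if ((j : nat)%:Z < k)%R then (Num.sqrt (k%:~R + theta ^+ 2))^-1
           else if (j : nat)%:Z == k then theta / Num.sqrt (k%:~R + theta ^+ 2)
           else 0))
    & (alpha = d%:R ->
         admissible alpha (omega d) /\
         inner (omega d) (P_omega d *m omega d) = toC value)].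
Proof.
move=> _ /andP[alpha_ge1 alpha_le_d].
have [n floor_n [n_gt0 n_le_alpha alpha_lt]] := floor_natP alpha_ge1.
rewrite floor_n => k theta value.
have n_le_d : (n <= d)%N by rewrite -(ler_nat R); apply: le_trans n_le_alpha alpha_le_d.
have theta_ge0 : 0 <= theta by rewrite subr_ge0.
have theta_le1 : theta <= 1 by rewrite lerBlDl; apply: ltW.
have theta_eq0 : n = d -> theta = 0.
  by move=> n_d; apply/eqP; rewrite eq_le theta_ge0 andbT subr_le0 /k n_d.
have [opt_s opt_unit opt_value] :=
  optimal_schmidt_vector n_gt0 n_le_d theta_ge0 theta_le1 theta_eq0.
have admE psi := @admissibleE _ d alpha psi n floor_n n_gt0.
have opt_adm : admissible alpha (schmidt_vector (optimal_coeffs (d := d) n theta)).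
  apply/admE; split=> //; exists (optimal_coeffs n theta) => //.
  exact: optimal_coeffs_admissible.
split.
- split; first by exists (schmidt_vector (optimal_coeffs n theta)).
  move=> psi /admE [psi_unit [s psi_s s_adm]].
  exact: inner_P_omega_admissible_le n_gt0 n_le_d theta_ge0 theta_le1 psi_unit psi_s s_adm.
- by exists (schmidt_vector (optimal_coeffs n theta)).
move=> alpha_d; have n_d : n = d.
  by apply/eqP; rewrite eqn_leq n_le_d -ltnS -(ltr_nat R) -natr1 -alpha_d.
suff -> : omega d = schmidt_vector (optimal_coeffs n theta) by [].
by rewrite omega_optimal (theta_eq0 n_d) n_d.
Qed.
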